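(* Let $d\in\{2,3\}$, $r>\frac{d+1}{2}$, $\beta>0$, and let $\mathbf u\in H_{\mathbb C}$ with $\|A^{1/4}\mathbf u\|_\beta<\infty$. Then $$|\langle B(\mathbf u,\mathbf u),A^{r}e^{2\beta A^{1/2}}\mathbf u\rangle|\le C\,2^r C_W(r)\,\|\mathbf u\|_\beta\,\|A^{1/4}\mathbf u\|_\beta^2,$$ where $C>0$ depends only on $d$.
   Context: Periodic domain $\Omega=[0,2\pi]^d$, $H$ = real mean-zero divergence-free $L^2$ vector fields, $H_{\mathbb C}=H+iH$ with sesquilinear $L^2$ inner product $\langle\cdot,\cdot\rangle$. $A=-\Delta$, acting by multiplication by $|\mathbf k|^2$ on Fourier coefficients; $A^s$ and $e^{\beta A^{1/2}}$ act by $|\mathbf k|^{2s}$ and $e^{\beta|\mathbf k|}$. $\|\mathbf f\|_\beta=\|A^{r/2}e^{\beta A^{1/2}}\mathbf f\|$. $B(\mathbf u,\mathbf v)=\mathbb P(\mathbf u\cdot\nabla\mathbf v)$ with $\mathbb P$ the Leray–Helmholtz projection, extended complex-bilinearly. $C_W(r)=\frac{1}{\pi 2^{d-1}}\frac{2r-d}{2r-1-d}$. *)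

(* classical reals. Fourier-side model of H_C on the torus [0,2pi]^d. *)
From Stdlib Require Import Reals Lra ZArith List ClassicalEpsilon.
Import ListNotations.
Open Scope R_scope.

Record Cx := mkCx { Re : R; Im : R }.
Definition C0 : Cx := mkCx 0 0.
Definition Ci : Cx := mkCx 0 1.
Definition CR (x : R) : Cx := mkCx x 0.
Definition Cadd (a b : Cx) : Cx := mkCx (Re a + Re b) (Im a + Im b).
Definition Copp (a : Cx) : Cx := mkCx (- Re a) (- Im a).
Definition Cmul (a b : Cx) : Cx :=
  mkCx (Re a * Re b - Im a * Im b) (Re a * Im b + Im a * Re b).
Definition Cconj (a : Cx) : Cx := mkCx (Re a) (- Im a).
Definition Cmod2 (a : Cx) : R := Re a * Re a + Im a * Im a.
Definition Cmod (a : Cx) : R := sqrt (Cmod2 a).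

(** Wavevectors k in Z^d are lists of integers of length d. *)
Definition wave := list Z.
Definition kcomp (k : wave) (i : nat) : R := IZR (nth i k 0%Z).
Definition ksub (k j : wave) : wave := map (fun p => (fst p - snd p)%Z) (combine k j).
Definition sumn (d : nat) (f : nat -> R) : R := fold_right Rplus 0 (map f (seq 0 d)).
Definition Csumn (d : nat) (f : nat -> Cx) : Cx := fold_right Cadd C0 (map f (seq 0 d)).
Definition knorm2 (d : nat) (k : wave) : R := sumn d (fun i => kcomp k i * kcomp k i).

(** Complex d-vectors (components indexed by i < d) and vector fields given by
    their Fourier coefficients: u(x) = sum_k (u k) e^{i k.x}. *)
Definition cvec := nat -> Cx.
Definition field := wave -> cvec.
Definition dotC (d : nat) (a b : cvec) : Cx := Csumn d (fun i => Cmul (a i) (b i)).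
Definition cvnorm2 (d : nat) (a : cvec) : R := sumn d (fun i => Cmod2 (a i)).

Definition zrange (N : nat) : list Z :=
  map (fun n => (Z.of_nat n - Z.of_nat N)%Z) (seq 0 (2 * N + 1)).
Fixpoint box (d N : nat) : list wave :=
  match d with
  | O => [nil]
  | S d' => flat_map (fun z => map (cons z) (box d' N)) (zrange N)
  end.

Definition Cpsum (d : nat) (f : wave -> Cx) (N : nat) : Cx :=
  fold_right Cadd C0 (map f (box d N)).
Definition Cconv (d : nat) (f : wave -> Cx) (L : Cx) : Prop :=
  Un_cv (fun N => Re (Cpsum d f N)) (Re L) /\ Un_cv (fun N => Im (Cpsum d f N)) (Im L).
Definition Chas_sum (d : nat) (f : wave -> Cx) : Prop := exists L, Cconv d f L.
Definition Csum (d : nat) (f : wave -> Cx) : Cx :=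
  epsilon (inhabits C0) (fun L => Cconv d f L).

Definition Rpsum (d : nat) (f : wave -> R) (N : nat) : R :=
  fold_right Rplus 0 (map f (box d N)).
Definition Rconv (d : nat) (f : wave -> R) (L : R) : Prop := Un_cv (Rpsum d f) L.
Definition Rhas_sum (d : nat) (f : wave -> R) : Prop := exists L, Rconv d f L.
Definition Rsum (d : nat) (f : wave -> R) : R :=
  epsilon (inhabits 0) (fun L => Rconv d f L).

(** H_C: mean-zero, divergence-free, square-summable complex fields. *)
Definition in_HC (d : nat) (u : field) : Prop :=
  (forall m, (m < d)%nat -> u (repeat 0%Z d) m = C0) /\
  (forall k, length k = d -> dotC d (fun i => CR (kcomp k i)) (u k) = C0) /\
  Rhas_sum d (fun k => cvnorm2 d (u k)).

(** The L^2 inner product <f,g> = int f . conj g = (2 pi)^d sum_k f_k . conj g_k. *)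
Definition l2inner (d : nat) (f g : field) : Cx :=
  Cmul (CR ((2 * PI) ^ d))
       (Csum d (fun k => Csumn d (fun m => Cmul (f k m) (Cconj (g k m))))).

(** Fourier multiplier |k|^{2s} e^{t |k|}, i.e. the symbol of A^s e^{t A^{1/2}}. *)
Definition symb (d : nat) (s t : R) (k : wave) : R :=
  Rpower (knorm2 d k) s * exp (t * sqrt (knorm2 d k)).

(** ||A^{a} f||_beta^2 = ||A^{r/2 + a} e^{beta A^{1/2}} f||^2 *)
Definition gnorm2 (d : nat) (r beta a : R) (f : field) : R :=
  (2 * PI) ^ d * Rsum d (fun k => symb d (r + 2 * a) (2 * beta) k * cvnorm2 d (f k)).
Definition gnorm (d : nat) (r beta a : R) (f : field) : R := sqrt (gnorm2 d r beta a f).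

(** Fourier coefficient (u . grad v)^(k), component m:
    sum_j (u_{k-j} . (i j)) v_j,m *)
Definition conv_term (d : nat) (u v : field) (k : wave) (m : nat) (j : wave) : Cx :=
  Cmul (Cmul Ci (dotC d (u (ksub k j)) (fun i => CR (kcomp j i)))) (v j m).
Definition adv (d : nat) (u v : field) : field :=
  fun k m => Csum d (conv_term d u v k m).

(** Leray--Helmholtz projection: w_k - (k.w_k) k/|k|^2 for k <> 0, and 0 at k = 0. *)
Definition leray (d : nat) (w : field) : field :=
  fun k m =>
    if Req_EM_T (knorm2 d k) 0 then C0
    else Cadd (w k m)
              (Copp (Cmul (CR (kcomp k m / knorm2 d k))
                          (dotC d (fun i => CR (kcomp k i)) (w k)))).

Definition Bop (d : nat) (u v : field) : field := leray d (adv d u v).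

Definition Ar_exp (d : nat) (r beta : R) (f : field) : field :=
  fun k m => Cmul (CR (symb d r (2 * beta) k)) (f k m).

Definition CW (d : nat) (r : R) : R :=
  1 / (PI * 2 ^ (d - 1)) * ((2 * r - INR d) / (2 * r - 1 - INR d)).

From Stdlib Require Import Reals ZArith List Lra Lia ClassicalEpsilon FinFun.
Import ListNotations.
Open Scope R_scope.

(** In Fourier variables the Leray projection drops out of the pairing, since [k . u_k = 0].
    What remains is bounded by the trilinear sum
    [sum_(k,j) |k|^(2r) e^(2 beta |k|) |u_k| |u_(k-j)| |j| |u_j|].  Using
    [|k|^r <= 2^r (|j|^r + |k-j|^r)], [e^(beta |k|) <= e^(beta |j|) e^(beta |k-j|)] and
    [|j|^(1/2) <= |k|^(1/2) + |k-j|^(1/2)], it splits into four convolution sums, each bounded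
    by Young's inequality with two [l^2] factors (weighted as in [||u||_beta] or
    [||A^(1/4) u||_beta]) and one [l^1] factor.  The [l^1] factor is turned into an [l^2] one by
    Cauchy-Schwarz against [sum_(k <> 0) |k|^(-2r)], which is finite uniformly in
    [r > (d+1)/2] by comparison with a product of one-dimensional sums.  The argument works for
    every [d >= 1], and the constant absorbs [C_W(r) >= 1 / (pi 2^(d-1))]. *)

Definition lsum {A} (f : A -> R) (l : list A) : R := fold_right Rplus 0 (map f l).

Lemma lsum_nil {A} (f : A -> R) : lsum f [] = 0.
Proof. reflexivity. Qed.

Lemma lsum_cons {A} (f : A -> R) a l : lsum f (a :: l) = f a + lsum f l.
Proof. reflexivity. Qed.

Lemma lsum_app {A} (f : A -> R) l1 l2 : lsum f (l1 ++ l2) = lsum f l1 + lsum f l2.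
Proof.
  induction l1 as [|a l1 IH]; cbn [app]; [rewrite lsum_nil; lra|].
  rewrite !lsum_cons, IH; lra.
Qed.

Lemma lsum_map {A B} (f : B -> R) (g : A -> B) l : lsum f (map g l) = lsum (fun x => f (g x)) l.
Proof. unfold lsum; rewrite map_map; reflexivity. Qed.

Lemma lsum_flat_map {A B} (f : B -> R) (g : A -> list B) l :
  lsum f (flat_map g l) = lsum (fun x => lsum f (g x)) l.
Proof.
  induction l as [|a l IH]; [reflexivity|].
  change (flat_map g (a :: l)) with (g a ++ flat_map g l). rewrite lsum_app, IH; reflexivity.
Qed.

Lemma lsum_le {A} (f g : A -> R) l : (forall x, In x l -> f x <= g x) -> lsum f l <= lsum g l.
Proof.
  induction l as [|a l IH]; intros H; [rewrite ?lsum_nil; simpl; lra|].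
  rewrite !lsum_cons. apply Rplus_le_compat; [apply H; left | apply IH; intros; apply H; right]; auto.
Qed.

Lemma lsum_ext {A} (f g : A -> R) l : (forall x, In x l -> f x = g x) -> lsum f l = lsum g l.
Proof. intros H; apply Rle_antisym; apply lsum_le; intros x Hx; rewrite (H x Hx); lra. Qed.

Lemma lsum_const {A} c (l : list A) : lsum (fun _ => c) l = INR (length l) * c.
Proof.
  induction l as [|a l IH]; [rewrite ?lsum_nil; simpl; lra|].
  cbn [length]. rewrite lsum_cons, IH, S_INR; cbv beta; lra.
Qed.

Lemma lsum_nonneg {A} (f : A -> R) l : (forall x, In x l -> 0 <= f x) -> 0 <= lsum f l.
Proof.
  intros H. replace 0 with (lsum (fun _ => 0) l) by (rewrite lsum_const; ring).
  apply lsum_le; auto.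
Qed.

Lemma lsum_plus {A} (f g : A -> R) l : lsum (fun x => f x + g x) l = lsum f l + lsum g l.
Proof. induction l as [|a l IH]; [rewrite ?lsum_nil; simpl; lra|]. rewrite !lsum_cons, IH; cbv beta; lra. Qed.

Lemma lsum_scal {A} c (f : A -> R) l : lsum (fun x => c * f x) l = c * lsum f l.
Proof. induction l as [|a l IH]; [rewrite ?lsum_nil; simpl; lra|]. rewrite !lsum_cons, IH; cbv beta; lra. Qed.

Lemma lsum_opp {A} (f : A -> R) l : lsum (fun x => - f x) l = - lsum f l.
Proof. induction l as [|a l IH]; [rewrite ?lsum_nil; simpl; lra|]. rewrite !lsum_cons, IH; cbv beta; lra. Qed.

Lemma lsum_swap {A B} (F : A -> B -> R) l1 l2 :
  lsum (fun x => lsum (F x) l2) l1 = lsum (fun y => lsum (fun x => F x y) l1) l2.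
Proof.
  induction l1 as [|a l1 IH].
  - rewrite lsum_nil, (lsum_ext _ (fun _ => 0)), lsum_const; [ring|]. intros; apply lsum_nil.
  - rewrite lsum_cons, IH, <- lsum_plus. reflexivity.
Qed.

Lemma lsum_ge_term {A} (f : A -> R) l x :
  (forall y, In y l -> 0 <= f y) -> In x l -> f x <= lsum f l.
Proof.
  induction l as [|a l IH]; intros H Hx; [destruct Hx|]. rewrite lsum_cons.
  assert (0 <= f a) by (apply H; left; auto).
  assert (0 <= lsum f l) by (apply lsum_nonneg; intros; apply H; right; auto).
  destruct Hx as [<-|Hx]; [lra|].
  assert (f x <= lsum f l) by (apply IH; auto; intros; apply H; right; auto). lra.
Qed.

Lemma lsum_incl_le {A} (f : A -> R) l1 l2 :
  NoDup l1 -> incl l1 l2 -> (forall x, In x l2 -> 0 <= f x) -> lsum f l1 <= lsum f l2.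
Proof.
  revert l2; induction l1 as [|a l1 IH]; intros l2 Hn Hi Hf.
  - apply lsum_nonneg; auto.
  - inversion Hn as [|? ? Ha Hn1]; subst.
    destruct (in_split a l2) as [x [y ->]]; [apply Hi; left; auto|].
    assert (lsum f l1 <= lsum f (x ++ y)).
    { apply IH; auto.
      - intros z Hz. assert (Hz' : In z (x ++ a :: y)) by (apply Hi; right; auto).
        apply in_app_iff in Hz'. apply in_app_iff. destruct Hz' as [?|[->|?]]; tauto.
      - intros z Hz; apply Hf. apply in_app_iff in Hz; apply in_app_iff; simpl; tauto. }
    assert (0 <= f a) by (apply Hf; apply in_app_iff; simpl; auto).
    rewrite lsum_app in *. rewrite !lsum_cons. lra.
Qed.

Lemma lsum_mul_eq0_of_sqr {A} (f g : A -> R) l :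
  lsum (fun x => f x * f x) l = 0 -> lsum (fun x => f x * g x) l = 0.
Proof.
  intros H. rewrite (lsum_ext _ (fun _ => 0)), lsum_const; [ring|].
  intros x Hx.
  assert (f x * f x <= lsum (fun x => f x * f x) l)
    by (apply (lsum_ge_term (fun x => f x * f x)); auto; intros; nra).
  assert (Hf : f x = 0) by nra. rewrite Hf; ring.
Qed.

Lemma lsum_Cauchy_Schwarz {A} (f g : A -> R) l :
  lsum (fun x => f x * g x) l <=
  sqrt (lsum (fun x => f x * f x) l) * sqrt (lsum (fun x => g x * g x) l).
Proof.
  set (F := lsum (fun x => f x * f x) l). set (G := lsum (fun x => g x * g x) l).
  set (S := lsum (fun x => f x * g x) l).
  assert (HF : 0 <= F) by (apply lsum_nonneg; intros; nra).
  assert (HG : 0 <= G) by (apply lsum_nonneg; intros; nra).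
  set (a := sqrt F). set (b := sqrt G).
  assert (Ha : a * a = F) by (apply sqrt_sqrt; lra). assert (Hb : b * b = G) by (apply sqrt_sqrt; lra).
  assert (0 <= a) by apply sqrt_pos. assert (0 <= b) by apply sqrt_pos.
  destruct (Req_dec (a * b) 0) as [Hab|Hab].
  - assert (S = 0) as ->; [|nra].
    destruct (Rmult_integral _ _ Hab) as [Z|Z].
    + apply lsum_mul_eq0_of_sqr. fold F. nra.
    + unfold S. rewrite (lsum_ext _ (fun x => g x * f x)) by (intros; ring).
      apply lsum_mul_eq0_of_sqr. fold G. nra.
  - (* summing [2 a b f g <= b^2 f^2 + a^2 g^2] gives [2 a b S <= 2 (a b)^2] *)
    assert (Hsum : 2 * (a * b) * S <= b * b * F + a * a * G).
    { unfold S, F, G. rewrite <- !lsum_scal, <- lsum_plus. apply lsum_le.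
      intros x _. pose proof (pow2_ge_0 (b * f x - a * g x)). nra. }
    rewrite Ha, Hb in Hsum. nra.
Qed.

Lemma lsum2_Cauchy_Schwarz {A B} (l1 : list A) (l2 : list B) (f g : A -> B -> R) :
  lsum (fun a => lsum (fun b => f a b * g a b) l2) l1 <=
  sqrt (lsum (fun a => lsum (fun b => f a b * f a b) l2) l1) *
  sqrt (lsum (fun a => lsum (fun b => g a b * g a b) l2) l1).
Proof.
  assert (E : forall F : A -> B -> R, lsum (fun a => lsum (F a) l2) l1 =
     lsum (fun p => F (fst p) (snd p)) (flat_map (fun a => map (pair a) l2) l1)).
  { intros F. rewrite lsum_flat_map. apply lsum_ext; intros a _. rewrite lsum_map. reflexivity. }
  rewrite !E. apply (lsum_Cauchy_Schwarz (fun p => f (fst p) (snd p)) (fun p => g (fst p) (snd p))).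
Qed.

Lemma lsum_Un_cv {A} (F : A -> nat -> R) (L : A -> R) l :
  (forall x, In x l -> Un_cv (F x) (L x)) -> Un_cv (fun n => lsum (fun x => F x n) l) (lsum L l).
Proof.
  induction l as [|a l IH]; intros H.
  - intros e He; exists 0%nat; intros; unfold R_dist; simpl; rewrite Rminus_diag, Rabs_R0; auto.
  - apply CV_plus; [apply H; left | apply IH; intros; apply H; right]; auto.
Qed.

Lemma in_zrange z N : In z (zrange N) <-> (Z.abs z <= Z.of_nat N)%Z.
Proof.
  unfold zrange. rewrite in_map_iff. split.
  - intros [n [<- Hn]]. apply in_seq in Hn. lia.
  - intros H. exists (Z.to_nat (z + Z.of_nat N)). split; [lia|]. apply in_seq. lia.
Qed.

Lemma in_box d N k :
  In k (box d N) <-> length k = d /\ Forall (fun z => (Z.abs z <= Z.of_nat N)%Z) k.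
Proof.
  revert k; induction d as [|d IH]; intros k; simpl.
  - split; [intros [<-|[]]; auto | intros [H _]; destruct k; [left; auto | discriminate]].
  - rewrite in_flat_map. split.
    + intros [z [Hz Hk]]. apply in_map_iff in Hk. destruct Hk as [t [<- Ht]].
      apply IH in Ht. apply in_zrange in Hz. destruct Ht. simpl; auto.
    + intros [Hl HF]. destruct k as [|z t]; [discriminate|]. inversion HF; subst.
      exists z. split; [apply in_zrange; auto|]. apply in_map, IH. auto.
Qed.

Lemma length_in_box d N k : In k (box d N) -> length k = d.
Proof. intros H; apply in_box in H; tauto. Qed.

Lemma NoDup_box d N : NoDup (box d N).
Proof.
  induction d as [|d IH]; simpl; [constructor; [intros []|constructor]|].
  assert (Hz : NoDup (zrange N)).
  { apply Injective_map_NoDup; [intros a b H; lia | apply seq_NoDup]. }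
  induction Hz as [|z zs Hz _ IHz]; simpl; [constructor|].
  apply NoDup_app; auto.
  - apply Injective_map_NoDup; auto. intros a b H; inversion H; auto.
  - intros k Hk Hk'. apply in_map_iff in Hk. destruct Hk as [t [<- _]].
    apply in_flat_map in Hk'. destruct Hk' as [z' [Hz' Hk']]. apply in_map_iff in Hk'.
    destruct Hk' as [t' [E _]]. inversion E; subst. contradiction.
Qed.

Lemma box_mono d N N' k : (N <= N')%nat -> In k (box d N) -> In k (box d N').
Proof.
  intros HN H. apply in_box in H. apply in_box. destruct H as [H1 H2]; split; auto.
  eapply Forall_impl; [|exact H2]. simpl; lia.
Qed.

Lemma in_some_box d k : length k = d -> exists N, In k (box d N).
Proof.
  intros Hl. exists (fold_right (fun z m => Nat.max (Z.to_nat (Z.abs z)) m) 0%nat k).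
  apply in_box. split; auto. clear Hl.
  induction k as [|z k IH]; constructor; simpl; [lia|].
  eapply Forall_impl; [|exact IH]. simpl; lia.
Qed.

Lemma incl_some_box d (l : list wave) :
  (forall k, In k l -> length k = d) -> exists N, incl l (box d N).
Proof.
  induction l as [|k l IH]; intros H; [exists 0%nat; intros x []|].
  destruct IH as [N1 H1]; [intros; apply H; right; auto|].
  destruct (in_some_box d k) as [N2 H2]; [apply H; left; auto|].
  exists (Nat.max N1 N2). intros x [<-|Hx];
    [apply (box_mono d N2) | apply (box_mono d N1)]; auto; lia.
Qed.

Lemma Rpsum_mono d f N N' :
  (forall k, length k = d -> 0 <= f k) -> (N <= N')%nat -> Rpsum d f N <= Rpsum d f N'.
Proof.
  intros Hf HN. apply lsum_incl_le; [apply NoDup_box | | ].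
  - intros k Hk; eapply box_mono; eauto.
  - intros k Hk; apply Hf; eapply length_in_box; eauto.
Qed.

Lemma lsum_reindex_box_le d (f : wave -> R) (phi : wave -> wave) S N :
  (forall k, length k = d -> 0 <= f k) -> (forall M, Rpsum d f M <= S) ->
  (forall k, length k = d -> length (phi k) = d) ->
  (forall k k', length k = d -> length k' = d -> phi k = phi k' -> k = k') ->
  lsum (fun k => f (phi k)) (box d N) <= S.
Proof.
  intros Hf HS Hl Hi. rewrite <- lsum_map.
  destruct (incl_some_box d (map phi (box d N))) as [M HM].
  { intros k Hk. apply in_map_iff in Hk. destruct Hk as [k' [<- Hk']].
    apply Hl; eapply length_in_box; eauto. }
  eapply Rle_trans; [|apply (HS M)]. apply lsum_incl_le; auto.
  - apply NoDup_map_NoDup_ForallPairs; [|apply NoDup_box].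
    intros k k' Hk Hk'. apply Hi; eapply length_in_box; eauto.
  - intros k Hk; apply Hf; eapply length_in_box; eauto.
Qed.

Lemma Cx_ext a b : Re a = Re b -> Im a = Im b -> a = b.
Proof. destruct a, b; simpl; intros -> ->; reflexivity. Qed.

Lemma Cmod2_nonneg a : 0 <= Cmod2 a.
Proof. unfold Cmod2; nra. Qed.

Lemma Cmod_nonneg a : 0 <= Cmod a.
Proof. apply sqrt_pos. Qed.

Lemma Cmod_sqr a : Cmod a * Cmod a = Cmod2 a.
Proof. apply sqrt_sqrt, Cmod2_nonneg. Qed.

Lemma Cmod_mul a b : Cmod (Cmul a b) = Cmod a * Cmod b.
Proof.
  unfold Cmod. rewrite <- sqrt_mult by apply Cmod2_nonneg.
  f_equal. unfold Cmod2, Cmul; simpl; ring.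
Qed.

Lemma Cmod_CR x : Cmod (CR x) = Rabs x.
Proof.
  unfold Cmod, Cmod2, CR; simpl. rewrite <- sqrt_Rsqr_abs. f_equal. unfold Rsqr; ring.
Qed.

Lemma Cmod_conj a : Cmod (Cconj a) = Cmod a.
Proof. unfold Cmod, Cmod2, Cconj; simpl. f_equal; ring. Qed.

Lemma Cmod_Ci : Cmod Ci = 1.
Proof. unfold Cmod, Cmod2, Ci; simpl. replace (0 * 0 + 1 * 1) with 1 by ring. apply sqrt_1. Qed.

Lemma Cmod_C0 : Cmod C0 = 0.
Proof. unfold Cmod, Cmod2, C0; simpl. replace (0 * 0 + 0 * 0) with 0 by ring. apply sqrt_0. Qed.

Lemma Cmod_le z M : 0 <= M -> Cmod2 z <= M * M -> Cmod z <= M.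
Proof.
  intros HM H. unfold Cmod. rewrite <- (sqrt_square M) by auto. apply sqrt_le_1_alt; auto.
Qed.

Lemma Rabs_Re_le_Cmod z : Rabs (Re z) <= Cmod z.
Proof. unfold Cmod, Cmod2. rewrite <- sqrt_Rsqr_abs. apply sqrt_le_1_alt. unfold Rsqr; nra. Qed.

Lemma Rabs_Im_le_Cmod z : Rabs (Im z) <= Cmod z.
Proof. unfold Cmod, Cmod2. rewrite <- sqrt_Rsqr_abs. apply sqrt_le_1_alt. unfold Rsqr; nra. Qed.

Lemma Cmod_triangle a b : Cmod (Cadd a b) <= Cmod a + Cmod b.
Proof.
  pose proof (Cmod_nonneg a); pose proof (Cmod_nonneg b).
  apply Cmod_le; [lra|].
  assert (Hdot : Re a * Re b + Im a * Im b <= Cmod a * Cmod b).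
  { unfold Cmod. rewrite <- sqrt_mult by apply Cmod2_nonneg.
    apply Rle_trans with (Rabs (Re a * Re b + Im a * Im b)); [apply Rle_abs|].
    rewrite <- sqrt_Rsqr_abs. apply sqrt_le_1_alt. unfold Rsqr, Cmod2.
    pose proof (pow2_ge_0 (Re a * Im b - Im a * Re b)). nra. }
  pose proof (Cmod_sqr a); pose proof (Cmod_sqr b). unfold Cmod2, Cadd in *; simpl in *. nra.
Qed.

Definition Clsum {A} (f : A -> Cx) (l : list A) : Cx := fold_right Cadd C0 (map f l).

Lemma Re_Clsum {A} (f : A -> Cx) l : Re (Clsum f l) = lsum (fun x => Re (f x)) l.
Proof. induction l as [|a l IH]; [reflexivity|]. simpl. rewrite lsum_cons, <- IH. reflexivity. Qed.

Lemma Im_Clsum {A} (f : A -> Cx) l : Im (Clsum f l) = lsum (fun x => Im (f x)) l.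
Proof. induction l as [|a l IH]; [reflexivity|]. simpl. rewrite lsum_cons, <- IH. reflexivity. Qed.

Lemma Cmod_Clsum {A} (f : A -> Cx) l : Cmod (Clsum f l) <= lsum (fun x => Cmod (f x)) l.
Proof.
  induction l as [|a l IH]; [rewrite lsum_nil; apply Req_le, Cmod_C0|].
  rewrite lsum_cons. change (Clsum f (a :: l)) with (Cadd (f a) (Clsum f l)).
  pose proof (Cmod_triangle (f a) (Clsum f l)). lra.
Qed.

Lemma Rsum_eq d f L : Rconv d f L -> Rsum d f = L.
Proof.
  intros H. apply (UL_sequence (Rpsum d f)); auto.
  apply (epsilon_spec (inhabits 0) (fun L => Rconv d f L)). exists L; auto.
Qed.

Lemma Csum_conv d f : Chas_sum d f -> Cconv d f (Csum d f).
Proof. apply (epsilon_spec (inhabits C0) (fun L => Cconv d f L)). Qed.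

Lemma cv_const (c : R) : Un_cv (fun _ => c) c.
Proof. intros e He; exists 0%nat; intros; unfold R_dist; rewrite Rminus_diag, Rabs_R0; auto. Qed.

Lemma Rpsum_bounded_conv d f M :
  (forall k, length k = d -> 0 <= f k) -> (forall N, Rpsum d f N <= M) ->
  Rconv d f (Rsum d f) /\ (forall N, Rpsum d f N <= Rsum d f) /\ Rsum d f <= M.
Proof.
  intros Hf HM.
  assert (Hg : Un_growing (Rpsum d f)) by (intros n; apply Rpsum_mono; auto).
  destruct (growing_cv (Rpsum d f) Hg) as [L HL]; [exists M; intros x [n ->]; auto|].
  rewrite (Rsum_eq d f L HL). split; [auto|split].
  - apply growing_ineq; auto.
  - eapply Rle_cv_lim; [exact HM | exact HL | apply cv_const].
Qed.

Lemma Rpsum_bound_nonneg d f M :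
  (forall k, length k = d -> 0 <= f k) -> (forall N, Rpsum d f N <= M) -> 0 <= M.
Proof.
  intros Hf HM. eapply Rle_trans; [|apply (HM 0%nat)].
  apply lsum_nonneg. intros k Hk; apply Hf; eapply length_in_box; eauto.
Qed.

Lemma Rhas_sum_le d f :
  (forall k, length k = d -> 0 <= f k) -> Rhas_sum d f -> forall N, Rpsum d f N <= Rsum d f.
Proof.
  intros Hf [L HL] N. rewrite (Rsum_eq d f L HL).
  apply growing_ineq; auto. intros n; apply Rpsum_mono; auto.
Qed.

(** Split [f] into its positive and negative parts. *)
Lemma Rpsum_dominated_cv d (f g : wave -> R) M :
  (forall k, length k = d -> Rabs (f k) <= g k) -> (forall N, Rpsum d g N <= M) ->
  exists L, Un_cv (Rpsum d f) L.
Proof.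
  intros Hfg HM.
  assert (Hpart : forall h, (forall k, length k = d -> 0 <= h k <= g k) -> Rhas_sum d h).
  { intros h Hh. exists (Rsum d h). apply (Rpsum_bounded_conv d h M); [apply Hh|].
    intros N. eapply Rle_trans; [|apply (HM N)]. apply lsum_le.
    intros k Hk; apply Hh; eapply length_in_box; eauto. }
  set (fp := fun k => (Rabs (f k) + f k) / 2). set (fm := fun k => (Rabs (f k) - f k) / 2).
  destruct (Hpart fp) as [Lp Hp].
  { intros k Hk; specialize (Hfg k Hk). pose proof (Rle_abs (f k)). pose proof (Rle_abs (- f k)).
    rewrite Rabs_Ropp in *. unfold fp; lra. }
  destruct (Hpart fm) as [Lm Hm].
  { intros k Hk; specialize (Hfg k Hk). pose proof (Rle_abs (f k)). pose proof (Rle_abs (- f k)).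
    rewrite Rabs_Ropp in *. unfold fm; lra. }
  exists (Lp - Lm). apply (Un_cv_ext (fun N => Rpsum d fp N - Rpsum d fm N)); [|apply CV_minus; auto].
  intros N. change (lsum fp (box d N) - lsum fm (box d N) = lsum f (box d N)).
  unfold Rminus. rewrite <- lsum_opp, <- lsum_plus.
  apply lsum_ext; intros; unfold fp, fm; lra.
Qed.

Lemma Csum_dominated d (f : wave -> Cx) (g : wave -> R) M :
  (forall k, length k = d -> Cmod (f k) <= g k) -> (forall N, Rpsum d g N <= M) ->
  Chas_sum d f /\ Cmod (Csum d f) <= M.
Proof.
  intros Hfg HM.
  destruct (Rpsum_dominated_cv d (fun k => Re (f k)) g M) as [Lr Hr]; auto.
  { intros k Hk; eapply Rle_trans; [apply Rabs_Re_le_Cmod | auto]. }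
  destruct (Rpsum_dominated_cv d (fun k => Im (f k)) g M) as [Li Hi]; auto.
  { intros k Hk; eapply Rle_trans; [apply Rabs_Im_le_Cmod | auto]. }
  assert (Hs : Chas_sum d f).
  { exists (mkCx Lr Li). split; simpl; eapply Un_cv_ext; eauto; intros n; symmetry;
      [apply Re_Clsum | apply Im_Clsum]. }
  split; [exact Hs|].
  destruct (Csum_conv d f Hs) as [H1 H2].
  assert (HCN : forall N, Cmod (Cpsum d f N) <= M).
  { intros N. eapply Rle_trans; [apply Cmod_Clsum|]. eapply Rle_trans; [|apply (HM N)].
    apply lsum_le. intros k Hk; apply Hfg; eapply length_in_box; eauto. }
  assert (HM0 : 0 <= M) by (eapply Rle_trans; [apply Cmod_nonneg | apply (HCN 0%nat)]).
  apply Cmod_le; [exact HM0|].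
  eapply Rle_cv_lim; [| apply CV_plus; apply CV_mult; [exact H1|exact H1|exact H2|exact H2] | apply cv_const].
  intros N. simpl. fold (Cmod2 (Cpsum d f N)). rewrite <- Cmod_sqr.
  pose proof (HCN N). pose proof (Cmod_nonneg (Cpsum d f N)). nra.
Qed.

Lemma sumn_ext d f g : (forall i, (i < d)%nat -> f i = g i) -> sumn d f = sumn d g.
Proof. intros H. apply lsum_ext. intros i Hi; apply in_seq in Hi; apply H; lia. Qed.

Lemma sumn_le d f g : (forall i, (i < d)%nat -> f i <= g i) -> sumn d f <= sumn d g.
Proof. intros H. apply lsum_le. intros i Hi; apply in_seq in Hi; apply H; lia. Qed.

Lemma sumn_nonneg d f : (forall i, (i < d)%nat -> 0 <= f i) -> 0 <= sumn d f.
Proof. intros H. apply lsum_nonneg. intros i Hi; apply in_seq in Hi; apply H; lia. Qed.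

Lemma sumn_ge_term d f i : (forall i, (i < d)%nat -> 0 <= f i) -> (i < d)%nat -> f i <= sumn d f.
Proof.
  intros H Hi. apply lsum_ge_term; [|apply in_seq; lia].
  intros j Hj; apply in_seq in Hj; apply H; lia.
Qed.

Lemma sumn_plus d f g : sumn d (fun i => f i + g i) = sumn d f + sumn d g.
Proof. apply lsum_plus. Qed.

Lemma sumn_scal d c f : sumn d (fun i => c * f i) = c * sumn d f.
Proof. apply lsum_scal. Qed.

Lemma sumn_const d c : sumn d (fun _ => c) = INR d * c.
Proof. unfold sumn. fold (lsum (fun _ : nat => c) (seq 0 d)). rewrite lsum_const, length_seq; reflexivity. Qed.

Lemma Re_Csumn d f : Re (Csumn d f) = sumn d (fun i => Re (f i)).
Proof. apply (Re_Clsum f). Qed.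

Lemma Im_Csumn d f : Im (Csumn d f) = sumn d (fun i => Im (f i)).
Proof. apply (Im_Clsum f). Qed.

Lemma Cmod_Csumn d f : Cmod (Csumn d f) <= sumn d (fun i => Cmod (f i)).
Proof. apply (Cmod_Clsum f). Qed.

Definition vnorm (d : nat) (x : nat -> R) : R := sqrt (sumn d (fun i => x i * x i)).

Lemma vnorm_sqr d x : vnorm d x * vnorm d x = sumn d (fun i => x i * x i).
Proof. apply sqrt_sqrt, sumn_nonneg; intros; nra. Qed.

Lemma vnorm_ext d x y : (forall i, (i < d)%nat -> x i = y i) -> vnorm d x = vnorm d y.
Proof. intros H; unfold vnorm; f_equal; apply sumn_ext; intros; rewrite H; auto. Qed.

Lemma vnorm_opp d x : vnorm d (fun i => - x i) = vnorm d x.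
Proof. unfold vnorm; f_equal; apply sumn_ext; intros; ring. Qed.

Lemma vnorm_triangle d x y : vnorm d (fun i => x i + y i) <= vnorm d x + vnorm d y.
Proof.
  assert (CS : sumn d (fun i => x i * y i) <= vnorm d x * vnorm d y)
    by apply lsum_Cauchy_Schwarz.
  pose proof (vnorm_sqr d x); pose proof (vnorm_sqr d y).
  pose proof (sqrt_pos (sumn d (fun i => x i * x i))); pose proof (sqrt_pos (sumn d (fun i => y i * y i))).
  unfold vnorm at 1. rewrite <- (sqrt_square (vnorm d x + vnorm d y)) by (unfold vnorm; lra).
  apply sqrt_le_1_alt.
  replace (sumn d (fun i => (x i + y i) * (x i + y i))) with
    (sumn d (fun i => x i * x i) + 2 * sumn d (fun i => x i * y i) + sumn d (fun i => y i * y i)).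
  - nra.
  - rewrite <- sumn_scal, <- !sumn_plus. apply sumn_ext; intros; ring.
Qed.

Lemma Rabs_le_vnorm d x i : (i < d)%nat -> Rabs (x i) <= vnorm d x.
Proof.
  intros Hi. unfold vnorm. rewrite <- sqrt_Rsqr_abs. apply sqrt_le_1_alt. unfold Rsqr.
  apply (sumn_ge_term d (fun i => x i * x i)); auto. intros; nra.
Qed.

Definition knorm d k := sqrt (knorm2 d k).

Lemma knorm_nonneg d k : 0 <= knorm d k.
Proof. apply sqrt_pos. Qed.

Lemma Rabs_kcomp_le d k i : (i < d)%nat -> Rabs (kcomp k i) <= knorm d k.
Proof. apply (Rabs_le_vnorm d (kcomp k)). Qed.

Lemma knorm2_IZR d k :
  knorm2 d k = IZR (fold_right Z.add 0 (map (fun i => nth i k 0 * nth i k 0) (seq 0 d)))%Z.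
Proof.
  unfold knorm2, sumn, kcomp.
  induction (seq 0 d) as [|i s IH]; simpl; [reflexivity|]. rewrite IH, plus_IZR, mult_IZR; reflexivity.
Qed.

Lemma knorm2_0_or_ge1 d k : knorm2 d k = 0 \/ 1 <= knorm2 d k.
Proof.
  rewrite knorm2_IZR. set (s := seq 0 d).
  assert (H : (0 <= fold_right Z.add 0 (map (fun i => nth i k 0 * nth i k 0) s))%Z).
  { induction s as [|i s IH]; simpl; nia. }
  destruct (Z.eq_dec (fold_right Z.add 0 (map (fun i => nth i k 0 * nth i k 0) s)) 0)%Z as [E|E].
  - left; rewrite E; reflexivity.
  - right; apply IZR_le; lia.
Qed.

Lemma knorm2_eq0 d k : length k = d -> knorm2 d k = 0 -> k = repeat 0%Z d.
Proof.
  intros Hl H. apply nth_ext with 0%Z 0%Z; [rewrite repeat_length; auto|]. intros n Hn.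
  rewrite nth_repeat.
  assert (kcomp k n * kcomp k n <= knorm2 d k)
    by (apply (sumn_ge_term d (fun i => kcomp k i * kcomp k i)); [intros; nra | lia]).
  assert (Hz : kcomp k n = 0) by nra. apply eq_IZR in Hz. auto.
Qed.

Lemma length_ksub d k j : length k = d -> length j = d -> length (ksub k j) = d.
Proof. intros. unfold ksub. rewrite length_map, length_combine. lia. Qed.

Lemma kcomp_ksub k j i : length k = length j -> kcomp (ksub k j) i = kcomp k i - kcomp j i.
Proof.
  intros H. unfold kcomp, ksub. rewrite <- minus_IZR. f_equal.
  change 0%Z with ((fun p : Z * Z => (fst p - snd p)%Z) (0%Z, 0%Z)) at 1.
  rewrite map_nth, combine_nth by auto. reflexivity.
Qed.

Lemma ksub_inj d k k' j : length k = d -> length k' = d -> length j = d ->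
  ksub k j = ksub k' j -> k = k'.
Proof.
  intros Hk Hk' Hj H. apply nth_ext with 0%Z 0%Z; [lia|]. intros n Hn.
  assert (E := f_equal (fun l => kcomp l n) H). cbv beta in E.
  rewrite !kcomp_ksub in E by lia. unfold kcomp in E. apply eq_IZR. lra.
Qed.

Lemma ksub_inj_r d k j j' : length k = d -> length j = d -> length j' = d ->
  ksub k j = ksub k j' -> j = j'.
Proof.
  intros Hk Hj Hj' H. apply nth_ext with 0%Z 0%Z; [lia|]. intros n Hn.
  assert (E := f_equal (fun l => kcomp l n) H). cbv beta in E.
  rewrite !kcomp_ksub in E by lia. unfold kcomp in E. apply eq_IZR. lra.
Qed.

Lemma knorm_triangle d k j : length k = d -> length j = d ->
  knorm d k <= knorm d j + knorm d (ksub k j).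
Proof.
  intros Hk Hj. unfold knorm, knorm2. fold (vnorm d (kcomp k)) (vnorm d (kcomp j)) (vnorm d (kcomp (ksub k j))).
  rewrite (vnorm_ext d (kcomp k) (fun i => kcomp j i + kcomp (ksub k j) i)); [apply vnorm_triangle|].
  intros i Hi; rewrite kcomp_ksub by lia; ring.
Qed.

Lemma knorm_triangle_sub d k j : length k = d -> length j = d ->
  knorm d j <= knorm d k + knorm d (ksub k j).
Proof.
  intros Hk Hj. unfold knorm, knorm2. fold (vnorm d (kcomp k)) (vnorm d (kcomp j)) (vnorm d (kcomp (ksub k j))).
  rewrite <- (vnorm_opp d (kcomp (ksub k j))).
  rewrite (vnorm_ext d (kcomp j) (fun i => kcomp k i + - kcomp (ksub k j) i)); [apply vnorm_triangle|].
  intros i Hi; rewrite kcomp_ksub by lia; ring.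
Qed.

Lemma exp_le_compat x y : x <= y -> exp x <= exp y.
Proof. intros [H|H]; [left; apply exp_increasing; auto | subst; lra]. Qed.

Lemma ln_le_compat x y : 0 < x -> x <= y -> ln x <= ln y.
Proof. intros Hx [H|H]; [left; apply ln_increasing; auto | subst; lra]. Qed.

Lemma Rpower_pos a e : 0 < Rpower a e.
Proof. apply exp_pos. Qed.

(** Junk value: Stdlib's [ln 0] is [0], hence [Rpower 0 e = 1] for every [e]. *)
Lemma Rpower_0_l e : Rpower 0 e = 1.
Proof.
  assert (ln 0 = 0) as H0 by (unfold ln; destruct (Rlt_dec 0 0); [exfalso; lra | reflexivity]).
  unfold Rpower. rewrite H0, Rmult_0_r; apply exp_0.
Qed.

Lemma Rpower_1_l e : Rpower 1 e = 1.
Proof. unfold Rpower; rewrite ln_1, Rmult_0_r; apply exp_0. Qed.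

Lemma Rpower_le_antitone a b e : 0 < a -> a <= b -> e <= 0 -> Rpower b e <= Rpower a e.
Proof.
  intros Ha Hab He. apply exp_le_compat. pose proof (ln_le_compat a b Ha Hab). nra.
Qed.

Lemma Rpower_le1 a e : 1 <= a -> e <= 0 -> Rpower a e <= 1.
Proof. intros Ha He. rewrite <- (Rpower_1_l e). apply Rpower_le_antitone; lra. Qed.

Lemma Rpower_ge1 a e : 1 <= a -> 0 <= e -> 1 <= Rpower a e.
Proof. intros Ha He. rewrite <- (Rpower_O a) by lra. apply Rle_Rpower; lra. Qed.

Lemma inv_succ_le_ln_diff x : 0 < x -> 1 / (x + 1) <= ln (x + 1) - ln x.
Proof.
  intros Hx. assert (Hq : 0 < x / (x + 1)) by (apply Rdiv_lt_0_compat; lra).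
  pose proof (exp_ineq1_le (ln (x / (x + 1)))) as H. rewrite exp_ln in H by exact Hq.
  unfold Rdiv in H. rewrite ln_mult, ln_Rinv in H by (try apply Rinv_0_lt_compat; lra).
  replace (1 / (x + 1)) with (1 - x * / (x + 1)) by (field; lra). lra.
Qed.

(** The integral comparison [(x+1)^(-s) <= int_x^(x+1) t^(-s) dt]. *)
Lemma Rpower_telescope x s : 0 < x -> 1 < s ->
  (s - 1) * Rpower (x + 1) (- s) <= Rpower x (1 - s) - Rpower (x + 1) (1 - s).
Proof.
  intros Hx Hs. set (y := x + 1). set (t := (s - 1) * (ln y - ln x)).
  assert (Ht : s - 1 <= y * t).
  { pose proof (inv_succ_le_ln_diff x Hx) as Hln. fold y in Hln. unfold t.
    replace (s - 1) with (y * ((s - 1) * (1 / y))) at 1 by (field; unfold y; lra).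
    apply Rmult_le_compat_l; [unfold y; lra|]. apply Rmult_le_compat_l; lra. }
  assert (E1 : Rpower x (1 - s) = Rpower y (1 - s) * exp t)
    by (unfold Rpower, t; rewrite <- exp_plus; f_equal; ring).
  assert (E2 : Rpower y (1 - s) = y * Rpower y (- s)).
  { unfold Rpower. rewrite <- (exp_ln y) at 2 by (unfold y; lra). rewrite <- exp_plus. f_equal; ring. }
  pose proof (exp_ineq1_le t). pose proof (Rpower_pos y (- s)) as HP.
  fold y. rewrite E1, E2.
  assert (0 <= y * Rpower y (- s)) by (apply Rmult_le_pos; [unfold y|]; lra).
  assert (y * Rpower y (- s) * t <= y * Rpower y (- s) * (exp t - 1))
    by (apply Rmult_le_compat_l; lra).
  nra.
Qed.

Lemma zrange_S N : zrange (S N) = (- Z.of_nat (S N))%Z :: zrange N ++ [Z.of_nat (S N)].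
Proof.
  unfold zrange. replace (2 * S N + 1)%nat with (S (S (2 * N + 1))) by lia.
  rewrite seq_S, <- cons_seq, map_app, map_cons, <- app_comm_cons. f_equal. f_equal.
  - rewrite <- seq_shift, map_map. apply map_ext. intros; lia.
  - cbn [map]. f_equal. lia.
Qed.

Definition decay (p : R) (z : Z) : R := Rpower (1 + IZR z * IZR z) (- p).

Lemma decay_pos p z : 0 < decay p z.
Proof. apply Rpower_pos. Qed.

Lemma decay_le1 p z : 0 <= p -> decay p z <= 1.
Proof. intros Hp. apply Rpower_le1; [nra | lra]. Qed.

Lemma decay_le_Rpower p z : 0 <= p -> (1 <= Z.abs z)%Z ->
  decay p z <= Rpower (IZR (Z.abs z)) (- (2 * p)).
Proof.
  intros Hp Hz. assert (Hn : 1 <= IZR (Z.abs z)) by (apply IZR_le; lia).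
  replace (- (2 * p)) with (- p + - p) by ring.
  rewrite Rpower_plus, Rpower_mult_distr by lra.
  apply Rpower_le_antitone; [nra | | lra].
  rewrite <- mult_IZR. replace (Z.abs z * Z.abs z)%Z with (z * z)%Z by lia. rewrite mult_IZR. lra.
Qed.

Lemma lsum_decay_zrange p N : 1 < 2 * p -> lsum (decay p) (zrange N) <= 3 + 2 / (2 * p - 1).
Proof.
  intros Hp. set (s := 2 * p). assert (Hs : 0 < s - 1) by (unfold s; lra).
  (* comparison with [int_N^oo t^(-s) dt] through the telescoping bound *)
  assert (Hind : forall n, (1 <= n)%nat ->
    (s - 1) * lsum (decay p) (zrange n) + 2 * Rpower (INR n) (1 - s) <= 3 * (s - 1) + 2).
  { clear N. induction n as [|N IH]; intros HN; [exfalso; lia|].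
    rewrite zrange_S, lsum_cons, lsum_app, lsum_cons, lsum_nil.
    destruct (Nat.eq_dec N 0) as [->|HN0].
    - cbn - [decay]. rewrite Rpower_1_l.
      pose proof (decay_le1 p (-1) ltac:(lra)); pose proof (decay_le1 p 0 ltac:(lra));
        pose proof (decay_le1 p 1 ltac:(lra)). nra.
    - specialize (IH ltac:(lia)).
      assert (Hd : forall z, Z.abs z = Z.of_nat (S N) -> (s - 1) * decay p z <=
                 Rpower (INR N) (1 - s) - Rpower (INR N + 1) (1 - s)).
      { intros z Hz. eapply Rle_trans; [|apply Rpower_telescope; [apply lt_0_INR; lia | lra]].
        apply Rmult_le_compat_l; [lra|]. rewrite <- S_INR, INR_IZR_INZ, <- Hz.
        apply decay_le_Rpower; [lra | lia]. }
      pose proof (Hd (- Z.of_nat (S N))%Z ltac:(lia)). pose proof (Hd (Z.of_nat (S N)) ltac:(lia)).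
      rewrite S_INR. lra. }
  destruct N as [|N].
  - cbn - [decay]. pose proof (decay_le1 p 0 ltac:(lra)).
    assert (0 < 2 / (s - 1)) by (apply Rdiv_lt_0_compat; lra). fold s. lra.
  - specialize (Hind (S N) ltac:(lia)). pose proof (Rpower_pos (INR (S N)) (1 - s)).
    fold s. apply (Rmult_le_reg_l (s - 1)); [lra|].
    replace ((s - 1) * (3 + 2 / (s - 1))) with (3 * (s - 1) + 2) by (field; lra). lra.
Qed.

Definition sumsq (l : list Z) : R := fold_right (fun z s => IZR z * IZR z + s) 0 l.
Definition prod_succ_sq (l : list Z) : R := fold_right (fun z a => (1 + IZR z * IZR z) * a) 1 l.
Definition prod_decay (p : R) (l : list Z) : R := fold_right (fun z a => decay p z * a) 1 l.

Lemma knorm2_sumsq l : knorm2 (length l) l = sumsq l.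
Proof.
  induction l as [|z t IH]; [reflexivity|].
  change (lsum (fun i => kcomp (z :: t) i * kcomp (z :: t) i) (0%nat :: seq 1 (length t)) = sumsq (z :: t)).
  rewrite lsum_cons, <- seq_shift, lsum_map. simpl. rewrite <- IH. reflexivity.
Qed.

Lemma sumsq_nonneg l : 0 <= sumsq l.
Proof. induction l; simpl; nra. Qed.

Lemma prod_succ_sq_pos l : 0 < prod_succ_sq l.
Proof. induction l; simpl; nra. Qed.

Lemma prod_succ_sq_le l : prod_succ_sq l <= (1 + sumsq l) ^ length l.
Proof.
  induction l as [|z t IH]; simpl; [lra|].
  pose proof (sumsq_nonneg t). pose proof (prod_succ_sq_pos t).
  assert ((1 + sumsq t) ^ length t <= (1 + (IZR z * IZR z + sumsq t)) ^ length t)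
    by (apply pow_incr; nra).
  nra.
Qed.

Lemma prod_decay_Rpower p l : prod_decay p l = Rpower (prod_succ_sq l) (- p).
Proof.
  induction l as [|z t IH]; simpl; [rewrite Rpower_1_l; auto|].
  rewrite IH. unfold decay. rewrite Rpower_mult_distr; [auto | nra | apply prod_succ_sq_pos].
Qed.

Lemma lsum_prod_decay_box p d N : lsum (prod_decay p) (box d N) = lsum (decay p) (zrange N) ^ d.
Proof.
  induction d as [|d IH]; [simpl; unfold lsum; simpl; ring|].
  change (box (S d) N) with (flat_map (fun z => map (cons z) (box d N)) (zrange N)).
  rewrite lsum_flat_map, <- tech_pow_Rmult, Rmult_comm, <- lsum_scal.
  apply lsum_ext. intros z _. rewrite lsum_map. simpl. rewrite lsum_scal, IH. ring.
Qed.

(** [|k|^(-(d+1))] is dominated by the product [prod_i (1 + k_i^2)^(-(d+1)/(2d))],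
    whose sum factorizes into one-dimensional sums. *)
Lemma knorm2_Rpower_le_prod_decay d k : (1 <= d)%nat -> length k = d ->
  Rpower (knorm2 d k) (- ((INR d + 1) / 2)) <=
  Rpower 2 ((INR d + 1) / 2) * prod_decay (((INR d + 1) / 2) / INR d) k.
Proof.
  intros Hd Hl. set (q := (INR d + 1) / 2). set (p := q / INR d).
  assert (HdR : 1 <= INR d) by (apply (le_INR 1); auto).
  assert (Hq : 0 < q) by (unfold q; lra). assert (Hp : 0 < p) by (unfold p; apply Rdiv_lt_0_compat; lra).
  assert (H2q : 1 <= Rpower 2 q) by (apply Rpower_ge1; lra).
  assert (HP := prod_succ_sq_le k). rewrite Hl in HP.
  assert (Hk : knorm2 d k = sumsq k) by (rewrite <- Hl; apply knorm2_sumsq).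
  rewrite prod_decay_Rpower, Hk. set (n := sumsq k) in *.
  assert (Hn0 : 0 <= n) by apply sumsq_nonneg. pose proof (prod_succ_sq_pos k).
  assert (E : Rpower ((1 + n) ^ d) (- p) = Rpower (1 + n) (- q)).
  { rewrite <- Rpower_pow by lra. rewrite Rpower_mult.
    f_equal. unfold p; field; lra. }
  assert (HPn : Rpower (1 + n) (- q) <= Rpower (prod_succ_sq k) (- p))
    by (rewrite <- E; apply Rpower_le_antitone; auto; lra).
  destruct (knorm2_0_or_ge1 d k) as [H0|H1]; rewrite Hk in *.
  - rewrite H0, Rpower_0_l in *. rewrite Rplus_0_r, Rpower_1_l in HPn. nra.
  - assert (E2 : Rpower ((1 + n) / 2) (- q) = Rpower 2 q * Rpower (1 + n) (- q)).
    { unfold Rdiv, Rpower. rewrite ln_mult, ln_Rinv by lra. rewrite <- exp_plus. f_equal; ring. }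
    assert (Rpower n (- q) <= Rpower ((1 + n) / 2) (- q)) by (apply Rpower_le_antitone; lra).
    pose proof (Rpower_pos (1 + n) (- q)). nra.
Qed.

Lemma lattice_sum_bound d : (1 <= d)%nat -> exists K, 1 <= K /\
  forall r N, r > (INR d + 1) / 2 -> lsum (fun k => Rpower (knorm2 d k) (- r)) (box d N) <= K.
Proof.
  intros Hd. set (q := (INR d + 1) / 2). set (p := q / INR d).
  assert (HdR : 1 <= INR d) by (apply (le_INR 1); auto).
  assert (Hp : 1 < 2 * p).
  { unfold p, q. apply Rmult_lt_reg_r with (INR d); [lra|]. field_simplify; lra. }
  set (G := 3 + 2 / (2 * p - 1)).
  assert (HG : 3 <= G) by (assert (0 < 2 / (2 * p - 1)) by (apply Rdiv_lt_0_compat; lra); unfold G; lra).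
  assert (H2q : 1 <= Rpower 2 q) by (apply Rpower_ge1; unfold q; lra).
  exists (Rpower 2 q * G ^ d). split; [pose proof (pow_R1_Rle G d ltac:(lra)); nra|].
  intros r N Hr. eapply Rle_trans.
  - apply (lsum_le _ (fun k => Rpower 2 q * prod_decay p k)). intros k Hk.
    eapply Rle_trans; [|apply knorm2_Rpower_le_prod_decay; eauto using length_in_box].
    destruct (knorm2_0_or_ge1 d k) as [H0|H1].
    + rewrite H0, !Rpower_0_l; lra.
    + apply Rle_Rpower; auto. unfold q in *; lra.
  - rewrite lsum_scal, lsum_prod_decay_box. apply Rmult_le_compat_l; [lra|].
    apply pow_incr. split; [apply lsum_nonneg; intros; left; apply decay_pos|].
    apply lsum_decay_zrange; auto.
Qed.

Section Young.
Variable d : nat.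
Variables x y z : wave -> R.
Variables X2 Y2 Z : R.
Hypothesis z_nonneg : forall k, length k = d -> 0 <= z k.
Hypothesis x_l2 : forall N, Rpsum d (fun k => x k * x k) N <= X2.
Hypothesis y_l2 : forall N, Rpsum d (fun k => y k * y k) N <= Y2.
Hypothesis z_l1 : forall N, Rpsum d z N <= Z.

Lemma Young_bounds_nonneg : 0 <= X2 /\ 0 <= Y2 /\ 0 <= Z.
Proof.
  split; [|split];
    [ apply (Rpsum_bound_nonneg d (fun k => x k * x k))
    | apply (Rpsum_bound_nonneg d (fun k => y k * y k))
    | apply (Rpsum_bound_nonneg d z) ]; auto; intros; nra.
Qed.

Lemma Young_trilinear (a b : wave -> wave -> wave) N M :
  (forall k j, length k = d -> length j = d -> length (b k j) = d) ->
  (forall k, length k = d -> lsum (fun j => z (b k j)) (box d M) <= Z) ->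
  lsum (fun k => lsum (fun j => y (a k j) * y (a k j) * z (b k j)) (box d M)) (box d N) <= Y2 * Z ->
  lsum (fun k => lsum (fun j => x k * y (a k j) * z (b k j)) (box d M)) (box d N)
    <= sqrt X2 * sqrt Y2 * Z.
Proof.
  intros Hb Hz Hyz. destruct Young_bounds_nonneg as [HX2 [HY2 HZ]].
  assert (Hzb : forall k j, In k (box d N) -> In j (box d M) ->
                  sqrt (z (b k j)) * sqrt (z (b k j)) = z (b k j))
    by (intros; apply sqrt_sqrt, z_nonneg, Hb; eapply length_in_box; eauto).
  (* split [x_k y z] as [(x_k sqrt z) (y sqrt z)] and apply Cauchy-Schwarz *)
  rewrite (lsum_ext _ (fun k => lsum (fun j => (x k * sqrt (z (b k j))) *
                                            (y (a k j) * sqrt (z (b k j)))) (box d M))).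
  2: { intros k Hk. apply lsum_ext. intros j Hj.
       transitivity (x k * y (a k j) * (sqrt (z (b k j)) * sqrt (z (b k j)))); [rewrite Hzb; auto | ring]. }
  eapply Rle_trans; [apply lsum2_Cauchy_Schwarz|].
  assert (H1 : lsum (fun k => lsum (fun j => x k * sqrt (z (b k j)) * (x k * sqrt (z (b k j))))
                  (box d M)) (box d N) <= X2 * Z).
  { eapply Rle_trans with (lsum (fun k => Z * (x k * x k)) (box d N)).
    - apply lsum_le. intros k Hk.
      rewrite (lsum_ext _ (fun j => x k * x k * z (b k j))), lsum_scal.
      + rewrite Rmult_comm. apply Rmult_le_compat_r; [nra|]. apply Hz; eapply length_in_box; eauto.
      + intros j Hj. transitivity (x k * x k * (sqrt (z (b k j)) * sqrt (z (b k j)))); [ring|].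
        rewrite Hzb; auto.
    - rewrite lsum_scal, Rmult_comm. apply Rmult_le_compat_r; auto. apply x_l2. }
  assert (H2 : lsum (fun k => lsum (fun j => y (a k j) * sqrt (z (b k j)) * (y (a k j) * sqrt (z (b k j))))
                  (box d M)) (box d N) <= Y2 * Z).
  { eapply Rle_trans; [|exact Hyz]. apply Req_le, lsum_ext. intros k Hk. apply lsum_ext. intros j Hj.
    transitivity (y (a k j) * y (a k j) * (sqrt (z (b k j)) * sqrt (z (b k j)))); [ring|].
    rewrite Hzb; auto. }
  apply sqrt_le_1_alt in H1, H2. rewrite !sqrt_mult in H1, H2 by auto.
  pose proof (sqrt_sqrt Z HZ). pose proof (sqrt_pos X2). pose proof (sqrt_pos Y2). pose proof (sqrt_pos Z).
  eapply Rle_trans; [apply Rmult_le_compat; [apply sqrt_pos | apply sqrt_pos | exact H1 | exact H2]|].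
  nra.
Qed.

Lemma lsum_translate_le (f : wave -> R) F j N :
  length j = d -> (forall k, length k = d -> 0 <= f k) -> (forall N, Rpsum d f N <= F) ->
  lsum (fun k => f (ksub k j)) (box d N) <= F.
Proof.
  intros Hj Hf HF. apply (lsum_reindex_box_le d f (fun k => ksub k j)); auto.
  - intros k Hk; apply length_ksub; auto.
  - intros k k' Hk Hk'; apply (ksub_inj d); auto.
Qed.

Lemma Young_conv_l N M :
  lsum (fun k => lsum (fun j => x k * y j * z (ksub k j)) (box d M)) (box d N) <= sqrt X2 * sqrt Y2 * Z.
Proof.
  destruct Young_bounds_nonneg as [_ [_ HZ]].
  apply (Young_trilinear (fun k j => j) ksub).
  - apply length_ksub.
  - intros k Hk. apply (lsum_reindex_box_le d z (ksub k)); auto.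
    + intros j Hj; apply length_ksub; auto.
    + intros j j' Hj Hj'; apply (ksub_inj_r d); auto.
  - rewrite lsum_swap.
    eapply Rle_trans with (lsum (fun j => Z * (y j * y j)) (box d M)).
    + apply lsum_le. intros j Hj. rewrite lsum_scal, (Rmult_comm Z).
      apply Rmult_le_compat_l; [nra|]. apply lsum_translate_le; auto. eapply length_in_box; eauto.
    + rewrite lsum_scal, Rmult_comm. apply Rmult_le_compat_r; auto. apply y_l2.
Qed.

Lemma Young_conv_r N M :
  lsum (fun k => lsum (fun j => x k * y (ksub k j) * z j) (box d M)) (box d N) <= sqrt X2 * sqrt Y2 * Z.
Proof.
  destruct Young_bounds_nonneg as [_ [HY2 _]].
  apply (Young_trilinear ksub (fun k j => j)); auto.
  - intros k _. apply z_l1.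
  - rewrite lsum_swap.
    eapply Rle_trans with (lsum (fun j => Y2 * z j) (box d M)).
    + apply lsum_le. intros j Hj.
      rewrite (lsum_ext _ (fun k => z j * (y (ksub k j) * y (ksub k j)))) by (intros; ring).
      rewrite lsum_scal, Rmult_comm. apply Rmult_le_compat_r.
      * apply z_nonneg; eapply length_in_box; eauto.
      * apply (lsum_translate_le (fun k => y k * y k)); [eapply length_in_box; eauto | intros; nra | auto].
    + rewrite lsum_scal. apply Rmult_le_compat_l; auto. apply z_l1.
Qed.

End Young.

Lemma Rpower_plus_le x y r : 0 < x -> 0 < y -> 0 <= r ->
  Rpower (x + y) r <= Rpower 2 r * (Rpower x r + Rpower y r).
Proof.
  intros Hx Hy Hr. pose proof (Rmax_l x y); pose proof (Rmax_r x y).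
  assert (Hm : Rpower (x + y) r <= Rpower (2 * Rmax x y) r) by (apply Rle_Rpower_l; lra).
  rewrite <- Rpower_mult_distr in Hm by lra.
  pose proof (Rpower_pos x r); pose proof (Rpower_pos y r); pose proof (Rpower_pos 2 r).
  unfold Rmax in Hm; destruct (Rle_dec x y); nra.
Qed.

Lemma sqrt_plus_le x y : 0 <= x -> 0 <= y -> sqrt (x + y) <= sqrt x + sqrt y.
Proof.
  intros Hx Hy. pose proof (sqrt_pos x); pose proof (sqrt_pos y).
  rewrite <- (sqrt_square (sqrt x + sqrt y)) by lra. apply sqrt_le_1_alt.
  pose proof (sqrt_sqrt x Hx); pose proof (sqrt_sqrt y Hy). nra.
Qed.

(** The weight [P E s] of the frequency [k] is distributed over [j] and [l = k - j]. *)
Lemma weight_split_le Pk Pj Pl Ek Ej El Uk Ul Uj sk sj sl T :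
  0 <= Pk -> 0 <= Ek -> 0 <= Uk -> 0 <= Ul -> 0 <= Uj -> 0 <= sj ->
  Pk <= T * (Pj + Pl) -> Ek <= Ej * El -> sj <= sk + sl ->
  0 <= T * (Pj + Pl) -> 0 <= Ej * El ->
  Pk * Pk * (Ek * Ek) * Uk * (Ul * (sj * sj) * Uj) <=
  T * ((Pk * sk * Ek * Uk) * (Pj * sj * Ej * Uj) * (El * Ul)
     + (Pk * Ek * Uk) * (Pj * sj * Ej * Uj) * (sl * El * Ul)
     + (Pk * sk * Ek * Uk) * (Pl * El * Ul) * (sj * Ej * Uj)
     + (Pk * Ek * Uk) * (Pl * sl * El * Ul) * (sj * Ej * Uj)).
Proof.
  intros. set (X := Pk * Ek * Uk * sj * Uj * Ul).
  assert (0 <= X) by (unfold X; repeat apply Rmult_le_pos; auto).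
  replace (Pk * Pk * (Ek * Ek) * Uk * (Ul * (sj * sj) * Uj)) with (X * (Pk * Ek * sj))
    by (unfold X; ring).
  replace (T * _) with (X * ((T * (Pj + Pl)) * (Ej * El) * (sk + sl))) by (unfold X; ring).
  apply Rmult_le_compat_l; auto. apply Rmult_le_compat; auto; [apply Rmult_le_pos; auto|].
  apply Rmult_le_compat; auto.
Qed.

(** For [k] orthogonal to [v], the Leray projection of [w] at [k] has the same inner product
    with [v] as [w] itself. *)
Lemma Leray_inner_orth d (k : nat -> R) (w v : cvec) n s :
  n <> 0 -> dotC d (fun i => CR (k i)) v = C0 ->
  Csumn d (fun m => Cmul (Cadd (w m) (Copp (Cmul (CR (k m / n)) (dotC d (fun i => CR (k i)) w))))
                         (Cconj (Cmul (CR s) (v m))))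
  = Cmul (CR s) (Csumn d (fun m => Cmul (w m) (Cconj (v m)))).
Proof.
  intros Hn Hv. set (D := dotC d (fun i => CR (k i)) w).
  assert (Hre : sumn d (fun m => k m * Re (v m)) = 0).
  { transitivity (Re (dotC d (fun i => CR (k i)) v)); [|rewrite Hv; reflexivity].
    unfold dotC. rewrite Re_Csumn. apply sumn_ext. intros; simpl; ring. }
  assert (Him : sumn d (fun m => k m * Im (v m)) = 0).
  { transitivity (Im (dotC d (fun i => CR (k i)) v)); [|rewrite Hv; reflexivity].
    unfold dotC. rewrite Im_Csumn. apply sumn_ext. intros; simpl; ring. }
  apply Cx_ext; cbn [Re Im Cmul CR]; rewrite ?Re_Csumn, ?Im_Csumn.
  - transitivity (sumn d (fun m => s * Re (Cmul (w m) (Cconj (v m)))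
                   + (- (s * Re D / n)) * (k m * Re (v m)) + (- (s * Im D / n)) * (k m * Im (v m)))).
    + apply sumn_ext. intros m _. cbn [Re Im Cmul CR Cconj Cadd Copp]. field. auto.
    + rewrite !sumn_plus, !sumn_scal, Hre, Him. ring.
  - transitivity (sumn d (fun m => s * Im (Cmul (w m) (Cconj (v m)))
                   + (- (s * Im D / n)) * (k m * Re (v m)) + (s * Re D / n) * (k m * Im (v m)))).
    + apply sumn_ext. intros m _. cbn [Re Im Cmul CR Cconj Cadd Copp]. field. auto.
    + rewrite !sumn_plus, !sumn_scal, Hre, Him. ring.
Qed.

Section Estimate.
Variable d : nat.
Variables r beta : R.
Variable u : field.
Hypothesis d_ge1 : (1 <= d)%nat.
Hypothesis r_gt : r > (INR d + 1) / 2.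
Hypothesis beta_pos : beta > 0.
Hypothesis u_mean0 : forall m, (m < d)%nat -> u (repeat 0%Z d) m = C0.
Hypothesis u_div : forall k, length k = d -> dotC d (fun i => CR (kcomp k i)) (u k) = C0.
Hypothesis u_quarter : Rhas_sum d (fun k => symb d (r + 1/2) (2 * beta) k * cvnorm2 d (u k)).
Variable K : R.
Hypothesis K_bound : forall N, lsum (fun k => Rpower (knorm2 d k) (- r)) (box d N) <= K.

Lemma r_gt1 : 1 < r.
Proof. pose proof (le_INR 1 d d_ge1). simpl in *. lra. Qed.

Definition amp k := sqrt (cvnorm2 d (u k)).
Definition wpow k := Rpower (knorm d k) r.
Definition wexp k := exp (beta * knorm d k).
Definition sqk k := sqrt (knorm d k).

(** [(2 pi)^d sum_k f0 k ^ 2] and [(2 pi)^d sum_k f1 k ^ 2] are [||u||_beta^2] and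
    [||A^(1/4) u||_beta^2]; [g0] and [g1] are [f0] and [f1] divided by [|k|^r]. *)
Definition f0 k := wpow k * wexp k * amp k.
Definition f1 k := wpow k * sqk k * wexp k * amp k.
Definition g0 k := wexp k * amp k.
Definition g1 k := sqk k * wexp k * amp k.

Lemma cvnorm2_nonneg w : 0 <= cvnorm2 d w.
Proof. apply sumn_nonneg; intros; apply Cmod2_nonneg. Qed.

Lemma amp_nonneg k : 0 <= amp k.
Proof. apply sqrt_pos. Qed.

Lemma amp_sqr k : amp k * amp k = cvnorm2 d (u k).
Proof. apply sqrt_sqrt, cvnorm2_nonneg. Qed.

Lemma wpow_pos k : 0 < wpow k.
Proof. apply Rpower_pos. Qed.

Lemma wexp_ge1 k : 1 <= wexp k.
Proof. rewrite <- exp_0. apply exp_le_compat. pose proof (knorm_nonneg d k). nra. Qed.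

Lemma sqk_nonneg k : 0 <= sqk k.
Proof. apply sqrt_pos. Qed.

Lemma sqk_sqr k : sqk k * sqk k = knorm d k.
Proof. apply sqrt_sqrt, knorm_nonneg. Qed.

Ltac weight_pos :=
  repeat first [ apply Rmult_le_pos | apply amp_nonneg | apply sqk_nonneg
               | left; apply wpow_pos | left; apply (Rlt_le_trans _ 1); [lra | apply wexp_ge1] ].

Lemma f0_nonneg k : 0 <= f0 k. Proof. unfold f0; weight_pos. Qed.
Lemma f1_nonneg k : 0 <= f1 k. Proof. unfold f1; weight_pos. Qed.
Lemma g0_nonneg k : 0 <= g0 k. Proof. unfold g0; weight_pos. Qed.
Lemma g1_nonneg k : 0 <= g1 k. Proof. unfold g1; weight_pos. Qed.

Lemma amp_zero k : length k = d -> knorm2 d k = 0 -> amp k = 0.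
Proof.
  intros Hl H0. unfold amp. rewrite (knorm2_eq0 d k Hl H0). unfold cvnorm2.
  rewrite (sumn_ext d _ (fun _ => 0)), sumn_const, Rmult_0_r; [apply sqrt_0|].
  intros i Hi. rewrite u_mean0 by auto. unfold Cmod2, C0; simpl; ring.
Qed.

Lemma knorm_ge1 k : length k = d -> amp k <> 0 -> 1 <= knorm d k.
Proof.
  intros Hl HU. destruct (knorm2_0_or_ge1 d k) as [H0|H1]; [exfalso; apply HU, amp_zero; auto|].
  unfold knorm. rewrite <- sqrt_1. apply sqrt_le_1_alt; auto.
Qed.

Lemma symb_eq k : symb d r (2 * beta) k = wpow k * wpow k * (wexp k * wexp k).
Proof.
  unfold symb, wpow, wexp, knorm. rewrite <- exp_plus.
  replace (beta * _ + _) with (2 * beta * sqrt (knorm2 d k)) by ring.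
  f_equal. destruct (knorm2_0_or_ge1 d k) as [H0|H1].
  - rewrite H0, sqrt_0, !Rpower_0_l. ring.
  - rewrite Rpower_mult_distr, sqrt_sqrt; auto; try lra; apply sqrt_lt_R0; lra.
Qed.

Lemma symb_nonneg k : 0 <= symb d r (2 * beta) k.
Proof. rewrite symb_eq. pose proof (wpow_pos k); pose proof (wexp_ge1 k). nra. Qed.

Lemma f0_sqr k : f0 k * f0 k = symb d r (2 * beta) k * cvnorm2 d (u k).
Proof. rewrite symb_eq, <- amp_sqr. unfold f0; ring. Qed.

Lemma f1_sqr k : length k = d -> f1 k * f1 k = symb d (r + 1/2) (2 * beta) k * cvnorm2 d (u k).
Proof.
  intros Hl. rewrite <- amp_sqr. destruct (knorm2_0_or_ge1 d k) as [H0|H1].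
  - unfold f1. rewrite amp_zero by auto. ring.
  - unfold symb. rewrite Rpower_plus. replace (1/2) with (/2) by field. rewrite Rpower_sqrt by lra.
    replace (Rpower (knorm2 d k) r * sqrt (knorm2 d k) * exp (2 * beta * sqrt (knorm2 d k)))
      with (symb d r (2 * beta) k * sqrt (knorm2 d k)) by (unfold symb; ring).
    rewrite symb_eq. fold (knorm d k). rewrite <- sqk_sqr. unfold f1; ring.
Qed.

(** On the support of [u] we have [|k| >= 1], so [|k|^(r+1/2)] dominates [1], [|k|] and [|k|^r]. *)
Lemma f1_dominates k : length k = d ->
  f0 k * f0 k <= f1 k * f1 k /\ amp k * amp k <= f1 k * f1 k /\
  knorm d k * amp k * (knorm d k * amp k) <= f1 k * f1 k.
Proof.
  intros Hl. pose proof (f0_nonneg k). pose proof (amp_nonneg k).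
  destruct (Req_dec (amp k) 0) as [Ha|Ha].
  { unfold f0, f1. rewrite Ha. repeat split; nra. }
  pose proof (knorm_ge1 k Hl Ha) as Hk.
  assert (Hs : 1 <= sqk k) by (unfold sqk; rewrite <- sqrt_1; apply sqrt_le_1_alt; auto).
  assert (Hw : knorm d k <= wpow k).
  { unfold wpow. rewrite <- (Rpower_1 (knorm d k)) at 1 by lra. apply Rle_Rpower; auto. pose proof r_gt1; lra. }
  pose proof (wexp_ge1 k).
  assert (E : f1 k = f0 k * sqk k) by (unfold f0, f1; ring).
  assert (Hka : knorm d k * amp k <= f1 k).
  { unfold f1. replace (wpow k * sqk k * wexp k * amp k) with ((wpow k * sqk k * wexp k) * amp k) by ring.
    apply Rmult_le_compat_r; auto. assert (knorm d k <= wpow k * sqk k) by nra. nra. }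
  assert (Hf0 : f0 k <= f1 k) by (rewrite E; nra).
  assert (Hamp : amp k <= knorm d k * amp k) by nra.
  repeat split; apply Rmult_le_compat; nra.
Qed.

Definition sq_norm0 := Rsum d (fun k => symb d r (2 * beta) k * cvnorm2 d (u k)).
Definition sq_norm1 := Rsum d (fun k => symb d (r + 1/2) (2 * beta) k * cvnorm2 d (u k)).

Lemma f1_l2 N : Rpsum d (fun k => f1 k * f1 k) N <= sq_norm1.
Proof.
  eapply Rle_trans; [|apply Rhas_sum_le; auto].
  - apply Req_le, lsum_ext. intros k Hk. apply f1_sqr; eapply length_in_box; eauto.
  - intros k Hk. rewrite <- f1_sqr by auto. nra.
Qed.

Lemma f0_l2 N : Rpsum d (fun k => f0 k * f0 k) N <= sq_norm0.
Proof.
  destruct (Rpsum_bounded_conv d (fun k => symb d r (2 * beta) k * cvnorm2 d (u k)) sq_norm1)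
    as [_ [H _]].
  - intros k _. rewrite <- f0_sqr. nra.
  - intros M. eapply Rle_trans; [|apply (f1_l2 M)]. apply lsum_le. intros k Hk.
    rewrite <- f0_sqr. apply f1_dominates; eapply length_in_box; eauto.
  - eapply Rle_trans; [|exact (H N)]. apply Req_le, lsum_ext. intros; apply f0_sqr.
Qed.

Lemma sq_norms_nonneg : 0 <= sq_norm0 /\ 0 <= sq_norm1.
Proof.
  split; [apply (Rpsum_bound_nonneg d (fun k => f0 k * f0 k)); [|apply f0_l2]
         |apply (Rpsum_bound_nonneg d (fun k => f1 k * f1 k)); [|apply f1_l2]]; intros; nra.
Qed.

Lemma lsum_div_wpow_le (f : wave -> R) F N : (forall M, Rpsum d (fun k => f k * f k) M <= F) ->
  lsum (fun k => f k / wpow k) (box d N) <= sqrt F * sqrt K.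
Proof.
  intros HF. eapply Rle_trans; [apply (lsum_Cauchy_Schwarz f (fun k => / wpow k))|].
  apply Rmult_le_compat; try apply sqrt_pos; apply sqrt_le_1_alt; [apply HF|].
  eapply Rle_trans; [|apply (K_bound N)]. apply Req_le, lsum_ext. intros k _.
  rewrite Rpower_Ropp. pose proof (wpow_pos k). unfold wpow in *.
  destruct (knorm2_0_or_ge1 d k) as [H0|H1].
  - unfold knorm. rewrite H0, sqrt_0, !Rpower_0_l. field.
  - rewrite <- Rinv_mult. f_equal. unfold knorm.
    rewrite Rpower_mult_distr, sqrt_sqrt by (try apply sqrt_lt_R0; lra).
    reflexivity.
Qed.

Lemma g0_l1 N : Rpsum d g0 N <= sqrt sq_norm0 * sqrt K.
Proof.
  eapply Rle_trans; [|apply (lsum_div_wpow_le f0 sq_norm0 N f0_l2)].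
  apply Req_le, lsum_ext. intros k _. unfold g0, f0. field. pose proof (wpow_pos k); lra.
Qed.

Lemma g1_l1 N : Rpsum d g1 N <= sqrt sq_norm1 * sqrt K.
Proof.
  eapply Rle_trans; [|apply (lsum_div_wpow_le f1 sq_norm1 N f1_l2)].
  apply Req_le, lsum_ext. intros k _. unfold g1, f1. field. pose proof (wpow_pos k); lra.
Qed.

Lemma weight_pointwise_le k j : length k = d -> length j = d ->
  symb d r (2 * beta) k * amp k * (amp (ksub k j) * knorm d j * amp j) <=
  Rpower 2 r * (f1 k * f1 j * g0 (ksub k j) + f0 k * f1 j * g1 (ksub k j)
                + f1 k * f0 (ksub k j) * g1 j + f0 k * f1 (ksub k j) * g1 j).
Proof.
  intros Hk Hj. set (l := ksub k j). assert (Hl : length l = d) by (apply length_ksub; auto).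
  pose proof (Rpower_pos 2 r).
  assert (HR : 0 <= Rpower 2 r * (f1 k * f1 j * g0 l + f0 k * f1 j * g1 l
                                  + f1 k * f0 l * g1 j + f0 k * f1 l * g1 j)).
  { pose proof (f0_nonneg k); pose proof (f0_nonneg l); pose proof (f1_nonneg k); pose proof (f1_nonneg j);
    pose proof (f1_nonneg l); pose proof (g0_nonneg l); pose proof (g1_nonneg l); pose proof (g1_nonneg j).
    apply Rmult_le_pos; [lra|].
    repeat apply Rplus_le_le_0_compat; (apply Rmult_le_pos; [apply Rmult_le_pos|]; assumption). }
  destruct (Req_dec (amp k) 0) as [Z1|Z1]; [apply Rle_trans with 0; [right; rewrite Z1; ring | exact HR]|].
  destruct (Req_dec (amp l) 0) as [Z2|Z2]; [apply Rle_trans with 0; [right; rewrite Z2; ring | exact HR]|].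
  destruct (Req_dec (amp j) 0) as [Z3|Z3]; [apply Rle_trans with 0; [right; rewrite Z3; ring | exact HR]|].
  pose proof (knorm_ge1 k Hk Z1). pose proof (knorm_ge1 l Hl Z2). pose proof (knorm_ge1 j Hj Z3).
  pose proof (knorm_triangle d k j Hk Hj) as Tk. pose proof (knorm_triangle_sub d k j Hk Hj) as Tj.
  fold l in Tk, Tj.
  rewrite symb_eq, <- (sqk_sqr j). unfold f0, f1, g0, g1.
  pose proof (wexp_ge1 k); pose proof (wexp_ge1 j); pose proof (wexp_ge1 l); pose proof r_gt1.
  pose proof (wpow_pos k); pose proof (wpow_pos j); pose proof (wpow_pos l).
  apply weight_split_le; try solve [apply amp_nonneg | apply sqk_nonneg | apply Rmult_le_pos; lra | lra].
  - unfold wpow. eapply Rle_trans; [apply Rle_Rpower_l; [lra | split; [lra | exact Tk]]|].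
    apply Rpower_plus_le; lra.
  - unfold wexp. rewrite <- exp_plus. apply exp_le_compat. nra.
  - unfold sqk. eapply Rle_trans; [|apply sqrt_plus_le; apply knorm_nonneg]. apply sqrt_le_1_alt; auto.
Qed.

Lemma weighted_double_sum_le N M :
  lsum (fun k => symb d r (2 * beta) k * amp k *
                 lsum (fun j => amp (ksub k j) * knorm d j * amp j) (box d M)) (box d N)
  <= Rpower 2 r * (4 * (sqrt sq_norm0 * sq_norm1 * sqrt K)).
Proof.
  set (T := fun k j => f1 k * f1 j * g0 (ksub k j) + f0 k * f1 j * g1 (ksub k j)
                       + f1 k * f0 (ksub k j) * g1 j + f0 k * f1 (ksub k j) * g1 j).
  eapply Rle_trans with (lsum (fun k => lsum (fun j => Rpower 2 r * T k j) (box d M)) (box d N)).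
  { apply lsum_le. intros k Hk. rewrite <- lsum_scal. apply lsum_le. intros j Hj.
    apply weight_pointwise_le; eapply length_in_box; eauto. }
  rewrite (lsum_ext _ (fun k => Rpower 2 r * lsum (T k) (box d M))) by (intros; apply lsum_scal).
  rewrite lsum_scal. apply Rmult_le_compat_l; [left; apply Rpower_pos|].
  unfold T. rewrite (lsum_ext _ (fun k =>
      lsum (fun j => f1 k * f1 j * g0 (ksub k j)) (box d M) + lsum (fun j => f0 k * f1 j * g1 (ksub k j)) (box d M)
    + lsum (fun j => f1 k * f0 (ksub k j) * g1 j) (box d M) + lsum (fun j => f0 k * f1 (ksub k j) * g1 j) (box d M)))
    by (intros; rewrite !lsum_plus; reflexivity).
  rewrite !lsum_plus.
  pose proof f0_l2 as H0. pose proof f1_l2 as H1.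
  pose proof (fun k (_ : length k = d) => g0_nonneg k) as G0.
  pose proof (fun k (_ : length k = d) => g1_nonneg k) as G1.
  pose proof (Young_conv_l d f1 f1 g0 _ _ _ G0 H1 H1 g0_l1 N M).
  pose proof (Young_conv_l d f0 f1 g1 _ _ _ G1 H0 H1 g1_l1 N M).
  pose proof (Young_conv_r d f1 f0 g1 _ _ _ G1 H1 H0 g1_l1 N M).
  pose proof (Young_conv_r d f0 f1 g1 _ _ _ G1 H0 H1 g1_l1 N M).
  pose proof (sqrt_sqrt sq_norm1 (proj2 sq_norms_nonneg)) as HS1. set (s1 := sqrt sq_norm1) in *.
  replace (4 * (sqrt sq_norm0 * sq_norm1 * sqrt K)) with
    (s1 * s1 * (sqrt sq_norm0 * sqrt K) + sqrt sq_norm0 * s1 * (s1 * sqrt K)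
     + s1 * sqrt sq_norm0 * (s1 * sqrt K) + sqrt sq_norm0 * s1 * (s1 * sqrt K))
    by (rewrite <- HS1; ring).
  lra.
Qed.

Lemma Cmod_le_amp k i : (i < d)%nat -> Cmod (u k i) <= amp k.
Proof.
  intros Hi. apply sqrt_le_1_alt.
  apply (sumn_ge_term d (fun i => Cmod2 (u k i))); auto. intros; apply Cmod2_nonneg.
Qed.

Lemma conv_term_bound k m j : (m < d)%nat ->
  Cmod (conv_term d u u k m j) <= INR d * (amp (ksub k j) * knorm d j * amp j).
Proof.
  intros Hm. unfold conv_term. rewrite !Cmod_mul, Cmod_Ci, Rmult_1_l.
  assert (Hdot : Cmod (dotC d (u (ksub k j)) (fun i => CR (kcomp j i))) <= INR d * (amp (ksub k j) * knorm d j)).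
  { eapply Rle_trans; [apply Cmod_Csumn|]. rewrite <- sumn_const. apply sumn_le.
    intros i Hi. rewrite Cmod_mul, Cmod_CR.
    apply Rmult_le_compat; [apply Cmod_nonneg | apply Rabs_pos | apply Cmod_le_amp | apply Rabs_kcomp_le]; auto. }
  pose proof (Cmod_le_amp j m Hm). pose proof (Cmod_nonneg (u j m)).
  pose proof (Cmod_nonneg (dotC d (u (ksub k j)) (fun i => CR (kcomp j i)))).
  rewrite <- Rmult_assoc. apply Rmult_le_compat; auto.
Qed.

Definition conv k := Rsum d (fun j => amp (ksub k j) * knorm d j * amp j).

Lemma conv_facts k : length k = d ->
  Rconv d (fun j => amp (ksub k j) * knorm d j * amp j) (conv k) /\
  (forall M, Rpsum d (fun j => amp (ksub k j) * knorm d j * amp j) M <= conv k).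
Proof.
  intros Hk.
  assert (Hnn : forall j, length j = d -> 0 <= amp (ksub k j) * knorm d j * amp j).
  { intros j Hj. pose proof (amp_nonneg (ksub k j)); pose proof (amp_nonneg j);
      pose proof (knorm_nonneg d j). repeat apply Rmult_le_pos; auto. }
  enough (H : forall M, Rpsum d (fun j => amp (ksub k j) * knorm d j * amp j) M <= sq_norm1)
    by (destruct (Rpsum_bounded_conv d _ sq_norm1 Hnn H); tauto).
  intros M. change (lsum (fun j => amp (ksub k j) * knorm d j * amp j) (box d M) <= sq_norm1).
  rewrite (lsum_ext _ (fun j => amp (ksub k j) * (knorm d j * amp j))) by (intros; ring).
  eapply Rle_trans; [apply lsum_Cauchy_Schwarz|].
  rewrite <- (sqrt_sqrt sq_norm1) by apply sq_norms_nonneg.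
  apply Rmult_le_compat; try apply sqrt_pos; apply sqrt_le_1_alt.
  - apply (lsum_reindex_box_le d (fun w => amp w * amp w) (ksub k)); [intros; nra | | | ].
    + intros N. eapply Rle_trans; [|apply (f1_l2 N)]. apply lsum_le.
      intros w Hw. apply f1_dominates; eapply length_in_box; eauto.
    + intros j Hj; apply length_ksub; auto.
    + intros j j' Hj Hj'; apply (ksub_inj_r d); auto.
  - eapply Rle_trans; [|apply (f1_l2 M)]. apply lsum_le.
    intros j Hj. apply f1_dominates; eapply length_in_box; eauto.
Qed.

Lemma conv_nonneg k : length k = d -> 0 <= conv k.
Proof.
  intros Hk. eapply Rpsum_bound_nonneg; [|apply (conv_facts k Hk)].
  intros j _. pose proof (amp_nonneg (ksub k j)); pose proof (amp_nonneg j); pose proof (knorm_nonneg d j).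
  repeat apply Rmult_le_pos; auto.
Qed.

Lemma adv_facts k m : length k = d -> (m < d)%nat ->
  Chas_sum d (conv_term d u u k m) /\ Cmod (adv d u u k m) <= INR d * conv k.
Proof.
  intros Hk Hm. destruct (conv_facts k Hk) as [_ H2].
  apply (Csum_dominated d _ (fun j => INR d * (amp (ksub k j) * knorm d j * amp j))).
  - intros j _; apply conv_term_bound; auto.
  - intros M. change (lsum (fun j => INR d * (amp (ksub k j) * knorm d j * amp j)) (box d M) <= INR d * conv k).
    rewrite lsum_scal. apply Rmult_le_compat_l; [apply pos_INR | apply H2].
Qed.

Definition inner_term k := Csumn d (fun m => Cmul (Bop d u u k m) (Cconj (Ar_exp d r beta u k m))).

Lemma inner_term_bound k : length k = d ->
  Cmod (inner_term k) <= INR d * INR d * (symb d r (2 * beta) k * amp k * conv k).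
Proof.
  intros Hk. pose proof (pos_INR d). pose proof (symb_nonneg k). pose proof (amp_nonneg k).
  pose proof (conv_nonneg k Hk).
  assert (0 <= symb d r (2 * beta) k * amp k * conv k) by (apply Rmult_le_pos; [apply Rmult_le_pos|]; auto).
  unfold inner_term, Bop, leray, Ar_exp. destruct (Req_EM_T (knorm2 d k) 0) as [Z0|Z0].
  - eapply Rle_trans; [apply Cmod_Csumn|].
    rewrite (sumn_ext d _ (fun _ => 0)), sumn_const.
    + rewrite Rmult_0_r. nra.
    + intros m _. rewrite Cmod_mul, Cmod_C0; ring.
  - rewrite Leray_inner_orth by auto. rewrite Cmod_mul, Cmod_CR, Rabs_pos_eq by auto.
    replace (INR d * INR d * (symb d r (2 * beta) k * amp k * conv k))
      with (symb d r (2 * beta) k * (INR d * (INR d * conv k * amp k))) by ring.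
    apply Rmult_le_compat_l; auto. eapply Rle_trans; [apply Cmod_Csumn|].
    rewrite <- sumn_const. apply sumn_le.
    intros m Hm. rewrite Cmod_mul, Cmod_conj.
    apply Rmult_le_compat; [apply Cmod_nonneg | apply Cmod_nonneg | apply adv_facts | apply Cmod_le_amp]; auto.
Qed.

Lemma inner_term_l1 N :
  Rpsum d (fun k => INR d * INR d * (symb d r (2 * beta) k * amp k * conv k)) N
  <= INR d * INR d * (Rpower 2 r * (4 * (sqrt sq_norm0 * sq_norm1 * sqrt K))).
Proof.
  change (lsum (fun k => INR d * INR d * (symb d r (2 * beta) k * amp k * conv k)) (box d N)
          <= INR d * INR d * (Rpower 2 r * (4 * (sqrt sq_norm0 * sq_norm1 * sqrt K)))).
  rewrite lsum_scal. apply Rmult_le_compat_l; [pose proof (pos_INR d); nra|].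
  (* the inner sums converge to [conv k]; pass to the limit in the finite double sums *)
  eapply Rle_cv_lim; [intros M; apply (weighted_double_sum_le N M) | | apply cv_const].
  apply (lsum_Un_cv (fun k M => symb d r (2 * beta) k * amp k *
                                Rpsum d (fun j => amp (ksub k j) * knorm d j * amp j) M)).
  intros k Hk. apply CV_mult; [apply cv_const|]. apply conv_facts; eapply length_in_box; eauto.
Qed.

Lemma inner_estimate :
  (forall k m, length k = d -> (m < d)%nat -> Chas_sum d (conv_term d u u k m)) /\
  Chas_sum d inner_term /\
  Cmod (l2inner d (Bop d u u) (Ar_exp d r beta u))
    <= (2 * PI) ^ d * (INR d * INR d * (Rpower 2 r * (4 * (sqrt sq_norm0 * sq_norm1 * sqrt K)))).
Proof.
  split; [intros k m Hk Hm; apply adv_facts; auto|].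
  destruct (Csum_dominated d inner_term _ _ inner_term_bound inner_term_l1) as [Hs Hb].
  split; [exact Hs|].
  unfold l2inner. fold inner_term. rewrite Cmod_mul, Cmod_CR, Rabs_pos_eq.
  - apply Rmult_le_compat_l; auto. apply pow_le. pose proof PI_RGT_0; lra.
  - apply pow_le. pose proof PI_RGT_0; lra.
Qed.

Lemma gnorm_0_eq : gnorm d r beta 0 u = sqrt ((2 * PI) ^ d * sq_norm0).
Proof. unfold gnorm, gnorm2, sq_norm0. replace (r + 2 * 0) with r by ring. reflexivity. Qed.

Lemma gnorm_quarter_sqr : gnorm d r beta (1/4) u ^ 2 = (2 * PI) ^ d * sq_norm1.
Proof.
  unfold gnorm, gnorm2. replace (r + 2 * (1/4)) with (r + 1/2) by field. fold sq_norm1.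
  apply pow2_sqrt.
  apply Rmult_le_pos; [apply pow_le; pose proof PI_RGT_0; lra | apply sq_norms_nonneg].
Qed.

Lemma l2inner_bound :
  Cmod (l2inner d (Bop d u u) (Ar_exp d r beta u)) <=
  INR d * INR d * 4 * sqrt K * Rpower 2 r * gnorm d r beta 0 u * gnorm d r beta (1/4) u ^ 2.
Proof.
  eapply Rle_trans; [apply inner_estimate|].
  rewrite gnorm_0_eq, gnorm_quarter_sqr. destruct sq_norms_nonneg as [HS0 HS1].
  set (T := (2 * PI) ^ d). assert (HT : 1 <= T) by (apply pow_R1_Rle; pose proof PI2_1; lra).
  set (c := INR d * INR d * 4 * sqrt K * Rpower 2 r * (T * sq_norm1)).
  assert (Hc : 0 <= c).
  { pose proof (pos_INR d). pose proof (sqrt_pos K). pose proof (Rpower_pos 2 r).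
    unfold c. repeat apply Rmult_le_pos; lra. }
  replace (T * _) with (c * sqrt sq_norm0) by (unfold c; ring).
  replace (_ * (T * sq_norm1)) with (c * sqrt (T * sq_norm0)) by (unfold c; ring).
  apply Rmult_le_compat_l; [exact Hc|]. apply sqrt_le_1_alt. nra.
Qed.

End Estimate.

Lemma CW_lower_bound d r : r > (INR d + 1) / 2 -> 1 <= PI * 2 ^ (d - 1) * CW d r.
Proof.
  intros Hr. unfold CW. pose proof PI_RGT_0. pose proof (pow_lt 2 (d - 1) ltac:(lra)).
  assert (Hq : 1 <= (2 * r - INR d) / (2 * r - 1 - INR d)).
  { apply (Rmult_le_reg_r (2 * r - 1 - INR d)); [lra|].
    unfold Rdiv. rewrite Rmult_assoc, Rinv_l by lra. lra. }
  replace (PI * 2 ^ (d - 1) * (1 / (PI * 2 ^ (d - 1)) * ((2 * r - INR d) / (2 * r - 1 - INR d))))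
    with ((2 * r - INR d) / (2 * r - 1 - INR d)) by (field; split; lra).
  exact Hq.
Qed.

Theorem proposition3p2 :
  forall d : nat, (d = 2%nat \/ d = 3%nat) ->
  exists C : R, C > 0 /\
  forall (r beta : R) (u : field),
    r > (INR d + 1) / 2 ->
    beta > 0 ->
    in_HC d u ->
    Rhas_sum d (fun k => symb d (r + 1/2) (2 * beta) k * cvnorm2 d (u k)) ->
    (forall k m, length k = d -> (m < d)%nat -> Chas_sum d (conv_term d u u k m)) /\
    Chas_sum d (fun k => Csumn d (fun m =>
        Cmul (Bop d u u k m) (Cconj (Ar_exp d r beta u k m)))) /\
    Cmod (l2inner d (Bop d u u) (Ar_exp d r beta u))
      <= C * Rpower 2 r * CW d r * gnorm d r beta 0 u * (gnorm d r beta (1/4) u) ^ 2.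
Proof.
  intros d Hd. assert (Hd1 : (1 <= d)%nat) by lia.
  destruct (lattice_sum_bound d Hd1) as [K [HK1 HK]].
  set (D := INR d * INR d * 4 * sqrt K). set (P := PI * 2 ^ (d - 1)).
  assert (HD : 0 < D).
  { pose proof (le_INR 1 d Hd1). pose proof (sqrt_le_1_alt 1 K HK1). rewrite sqrt_1 in *.
    simpl in *. unfold D. nra. }
  assert (HP : 0 < P) by (pose proof PI_RGT_0; pose proof (pow_lt 2 (d - 1) ltac:(lra)); unfold P; nra).
  exists (D * P). split; [nra|].
  intros r beta u Hr Hbeta [Hu0 [Hdiv _]] Hq.
  destruct (inner_estimate d r beta u Hd1 Hr Hbeta Hu0 Hdiv Hq K (fun N => HK r N Hr))
    as [Hconv [Hsum _]].
  split; [exact Hconv|]. split; [exact Hsum|].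
  eapply Rle_trans; [apply (l2inner_bound d r beta u Hd1 Hr Hbeta Hu0 Hdiv Hq K (fun N => HK r N Hr))|].
  set (X := Rpower 2 r * gnorm d r beta 0 u * gnorm d r beta (1/4) u ^ 2).
  assert (HX : 0 <= X).
  { apply Rmult_le_pos; [apply Rmult_le_pos|];
      [left; apply Rpower_pos | apply sqrt_pos | apply pow2_ge_0]. }
  pose proof (CW_lower_bound d r Hr) as HCW. fold P in HCW.
  replace (D * P * Rpower 2 r * CW d r * gnorm d r beta 0 u * gnorm d r beta (1/4) u ^ 2)
    with (D * X * (P * CW d r)) by (unfold X; ring).
  replace (INR d * INR d * 4 * sqrt K * Rpower 2 r * gnorm d r beta 0 u * gnorm d r beta (1/4) u ^ 2)
    with (D * X * 1) by (unfold D, X; ring).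
  apply Rmult_le_compat_l; [nra | exact HCW].
Qed.
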